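(* Let $s$ be a positive integer, let $0<\varepsilon<1$, and let $A,B\subseteq[s]$. Put $\alpha=|B|/s$. Then there exist at least \[ \frac{\varepsilon}{1-(1-\varepsilon)\alpha}\,\alpha s \] elements $x\in[s]$ such that $|(A+x)\cap B|\ge(1-\varepsilon)\alpha|A|$.
   Context: $[s]=\{1,\dots,s\}$. For $A\subseteq[s]$ and an integer $x$, $A+x$ denotes the cyclic shift of $A$ within $[s]$ by $x$, i.e. $A+x=\{((a-1+x)\bmod s)+1 : a\in A\}$. *)

From mathcomp Require Import all_boot all_order all_algebra.
Set Implicit Arguments. Unset Strict Implicit. Unset Printing Implicit Defensive.

(* [s] = {1,...,s} is represented by 'I_s, the element i : 'I_s standing
   for i+1.  Under this encoding the cyclic shift
   A + x = {((a-1+x) mod s)+1 : a in A} becomes {(i + x) mod s : i in A}. *)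
Definition cshift (s : nat) (A : {set 'I_s}) (x : nat) : {set 'I_s} :=
  [set j : 'I_s | [exists i in A, nat_of_ord j == (nat_of_ord i + x) %% s]].

Definition interval1 (s : nat) : seq nat := iota 1 s.

(* Summing over all s shifts, every a in A hits every b in B exactly once, so
   the overlaps |(A+x) ∩ B| add up to |A||B| = α s |A|.  Each overlap is at most
   |A|, so if N shifts reach the threshold (1-ε)α|A| then
   α s |A| <= N |A| + (s - N)(1-ε)α|A|, which rearranges to
   ε α s <= N (1 - (1-ε)α). *)
From mathcomp Require Import all_boot all_order all_algebra.
From mathcomp Require Import ring lra.
Import Order.TTheory GRing.Theory Num.Theory.

Set Implicit Arguments.
Unset Strict Implicit.
Unset Printing Implicit Defensive.

Section CyclicShift.

Variables (s : nat) (hs : (0 < s)%N).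

Definition shift_ord (x : nat) (i : 'I_s) : 'I_s := Ordinal (ltn_pmod (i + x) hs).

Lemma shift_ord_inj x : injective (shift_ord x).
Proof.
move=> i j /(congr1 val) /= /eqP; rewrite eqn_modDr !modn_small // => /eqP.
exact: val_inj.
Qed.

Lemma shift_ord_injl (i : 'I_s) : injective (fun x : 'I_s => shift_ord x.+1 i).
Proof.
move=> x y /(congr1 val) /= /eqP; rewrite -!addSnnS eqn_modDl !modn_small //.
by move=> /eqP/val_inj.
Qed.

Lemma cshiftE (A : {set 'I_s}) x : cshift A x = shift_ord x @: A.
Proof.
apply/setP=> j; rewrite inE; apply/existsP/imsetP.
  by case=> i /andP[iA /eqP e]; exists i => //; apply: val_inj.
by case=> i iA ->; exists i; rewrite iA /=.
Qed.

Lemma card_cshiftI_le (A B : {set 'I_s}) x : (#|cshift A x :&: B| <= #|A|)%N.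
Proof.
rewrite (leq_trans (subset_leq_card (subsetIl _ _))) //.
by rewrite cshiftE card_imset //; apply: shift_ord_inj.
Qed.

Lemma card_cshiftI (A B : {set 'I_s}) x :
  #|cshift A x :&: B| = (\sum_(i in A) (shift_ord x i \in B))%N.
Proof.
rewrite cshiftE -sum1_card (eq_bigl (fun j => (j \in shift_ord x @: A) && (j \in B))).
  rewrite big_mkcondr big_imset /=; last by move=> i j _ _; apply: shift_ord_inj.
  by apply: eq_bigr => i _; case: (_ \in B).
by move=> j; rewrite inE.
Qed.

Lemma sum_shift_ord_in (B : {set 'I_s}) (i : 'I_s) :
  (\sum_(x < s) (shift_ord x.+1 i \in B))%N = #|B|.
Proof.
rewrite -sum1_card [RHS](reindex_inj (@shift_ord_injl i)) [RHS]big_mkcond /=.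
by apply: eq_bigr => x _; case: (_ \in B).
Qed.

Lemma big_interval1 (F : nat -> nat) :
  (\sum_(x <- interval1 s) F x)%N = (\sum_(x < s) F x.+1)%N.
Proof. by rewrite /interval1 -(addn0 1) iotaDl big_map -val_enum_ord big_map big_enum. Qed.

Lemma sum_card_cshiftI (A B : {set 'I_s}) :
  (\sum_(x <- interval1 s) #|cshift A x :&: B|)%N = (#|A| * #|B|)%N.
Proof.
rewrite big_interval1.
under eq_bigr => x _ do rewrite card_cshiftI.
rewrite exchange_big /= -sum1_card big_distrl /=.
by apply: eq_bigr => i _; rewrite mul1n sum_shift_ord_in.
Qed.

End CyclicShift.

Local Open Scope ring_scope.

Lemma sum_le_threshold_count (R : realDomainType) (T : Type) (r : seq T)
    (f : T -> R) (M c : R) :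
  (forall x, f x <= M) ->
  \sum_(x <- r) f x
    <= M *+ count (fun x => c <= f x) r + c *+ count (predC (fun x => c <= f x)) r.
Proof.
move=> fM; elim: r => [|x r IHr]; first by rewrite big_nil !mulr0n addr0.
rewrite big_cons /=; case: lerP => [cf|fc] /=.
  by rewrite add1n mulrS -addrA lerD.
by rewrite add1n add0n mulrS addrCA lerD // ltW.
Qed.

Lemma threshold_count_bound (R : realFieldType) (eps alpha s n : R) :
  0 < eps -> eps < 1 -> 0 <= alpha -> alpha <= 1 ->
  alpha * s <= n + (1 - eps) * alpha * (s - n) ->
  eps / (1 - (1 - eps) * alpha) * alpha * s <= n.
Proof.
move=> eps0 eps1 alpha0 alpha1 avg.
have D0 : 0 < 1 - (1 - eps) * alpha.
  by rewrite subr_gt0 (le_lt_trans (ler_piMr _ alpha1)) ?gtrBl // subr_ge0 ltW.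
have -> : eps / (1 - (1 - eps) * alpha) * alpha * s
          = eps * alpha * s / (1 - (1 - eps) * alpha) by ring.
rewrite ler_pdivrMr // -subr_ge0.
by move: avg; rewrite -subr_ge0; congr (0 <= _); ring.
Qed.

Theorem proposition1 (s : nat) (hs : (0 < s)%N) (R : realFieldType) (eps : R)
    (heps0 : 0 < eps) (heps1 : eps < 1) (A B : {set 'I_s}) :
  let alpha : R := #|B|%:R / s%:R in
  eps / (1 - (1 - eps) * alpha) * alpha * s%:R
    <= (count (fun x : nat =>
              (1 - eps) * alpha * #|A|%:R <= #|cshift A x :&: B|%:R)
             (interval1 s))%:R.
Proof.
cbv zeta; set alpha := (#|B|%:R / s%:R : R).
set P := fun x : nat => _ <= _; set N := count P _.
have s0 : 0 < s%:R :> R by rewrite ltr0n.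
have cardB : #|B|%:R = alpha * s%:R by rewrite mulfVK // gt_eqF.
have alpha0 : 0 <= alpha by rewrite divr_ge0.
have alpha1 : alpha <= 1.
  by rewrite ler_pdivrMr // mul1r ler_nat -[X in (_ <= X)%N]card_ord max_card.
apply: threshold_count_bound => //.
have [A0|A0] := posnP #|A|.
  have -> : N = s.
    rewrite /N (eq_count (a2 := predT)) ?count_predT ?size_iota // => x.
    by rewrite /P A0 mulr0 ler0n.
  by rewrite subrr mulr0 addr0 ler_piMl // ltW.
have sum_overlaps : \sum_(x <- interval1 s) (#|cshift A x :&: B|%:R : R)
    <= #|A|%:R *+ N + (1 - eps) * alpha * #|A|%:R *+ count (predC P) (interval1 s).
  (* Given implicitly, f and M send unification into unfolding the cardinals. *)
  apply: (@sum_le_threshold_count R nat (interval1 s)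
            (fun x => #|cshift A x :&: B|%:R) #|A|%:R).
  by move=> x; rewrite ler_nat (card_cshiftI_le hs).
have -> : s%:R - N%:R = (count (predC P) (interval1 s))%:R :> R.
  by rewrite -[s in s%:R](size_iota 1 s) -(count_predC P) natrD addrC addKr.
rewrite -(ler_pM2l (_ : 0 < #|A|%:R :> R)) ?ltr0n //.
move: sum_overlaps; rewrite -natr_sum (sum_card_cshiftI hs) natrM cardB.
rewrite -[_ *+ N]mulr_natr -[_ *+ count _ _]mulr_natr.
lra.
Qed.
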